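(* Let $A=A_{\bar 0}\oplus A_{\bar 1}$ be a finite-dimensional associative superalgebra over an algebraically closed field $\mathbb{K}$ of characteristic zero. Then $A$ admits an even-symmetric structure if and only if there exist two isomorphisms of $A_{\bar 0}$-bimodules $\phi_{\bar 0}:A_{\bar 0}\to A_{\bar 0}^*$ and $\phi_{\bar 1}:A_{\bar 1}\to A_{\bar 1}^*$ such that $$\phi_i(x)(y)=(-1)^i\phi_i(y)(x)\quad\text{for all } x,y\in A_i,\ i\in\{\bar 0,\bar 1\},$$ $$\phi_{\bar 1}(x.y)(z)=\phi_{\bar 0}(x)(y.z)\quad\text{for all } x\in A_{\bar 0},\ y,z\in A_{\bar 1}.$$
   Context: A superalgebra is a $\mathbb{Z}_2$-graded algebra $A=A_{\bar 0}\oplus A_{\bar 1}$ with $A_\alpha A_\beta\subseteq A_{\alpha+\beta}$; it is associative if it is associative as an algebra; $|x|$ denotes the degree of a homogeneous element $x$. A bilinear form $B$ on $A$ is even if $B(A_{\bar 0},A_{\bar 1})=\{0\}$ (so also $B(A_{\bar 1},A_{\bar 0})=\{0\}$), and odd if $B(A_{\bar 0},A_{\bar 0})=B(A_{\bar 1},A_{\bar 1})=\{0\}$. $B$ is supersymmetric if $B(x,y)=(-1)^{|x||y|}B(y,x)$ for homogeneous $x,y$, associative if $B(x.y,z)=B(x,y.z)$ for all $x,y,z$, and non-degenerate if $B(x,A)=\{0\}$ implies $x=0$. An even-symmetric (resp. odd-symmetric) structure on $A$ is an even (resp. odd), supersymmetric, associative, non-degenerate bilinear form on $A$. For $i\in\{\bar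 0,\bar 1\}$, $A_i$ is an $A_{\bar 0}$-bimodule via left and right multiplication, and $A_i^*$ is an $A_{\bar 0}$-bimodule via $(x\cdot f)(y)=f(y.x)$ and $(f\cdot x)(y)=f(x.y)$ for $x\in A_{\bar 0}$, $f\in A_i^*$, $y\in A_i$. In the formula $(-1)^i$, $i$ is read as $0$ or $1$. *)

From HB Require Import structures.
From mathcomp Require Import all_boot all_order all_algebra.
Set Implicit Arguments. Unset Strict Implicit. Unset Printing Implicit Defensive.
Import GRing.Theory.
Local Open Scope ring_scope.

(* A superalgebra A = A0 (+) A1 over K, given by its homogeneous components
   (finite-dimensional K-vector spaces) and the four component products
   A_i x A_j -> A_(i+j). The underlying space of A is the product A0 * A1. *)
Record superMul (K : fieldType) (A0 A1 : vectType K) := SuperMul {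
  m00 : A0 -> A0 -> A0;
  m01 : A0 -> A1 -> A1;
  m10 : A1 -> A0 -> A1;
  m11 : A1 -> A1 -> A0 }.

Definition bilin (K : fieldType) (U V W : lmodType K) (f : U -> V -> W) :=
  (forall (a : K) u u' v, f (a *: u + u') v = a *: f u v + f u' v) /\
  (forall (a : K) u v v', f u (a *: v + v') = a *: f u v + f u v').

Definition lin_form (K : fieldType) (V : lmodType K) (f : V -> K) :=
  forall (a : K) u v, f (a *: u + v) = a * f u + f v.

Section Super.
Variables (K : fieldType) (A0 A1 : vectType K) (S : superMul A0 A1).

Definition smul (x y : A0 * A1) : A0 * A1 :=
  (m00 S x.1 y.1 + m11 S x.2 y.2, m01 S x.1 y.2 + m10 S x.2 y.1).

Definition assoc_superalgebra :=
  [/\ bilin (m00 S), bilin (m01 S), bilin (m10 S), bilin (m11 S)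
    & forall x y z, smul (smul x y) z = smul x (smul y z)].

(* homogeneous of degree i (false = 0bar, true = 1bar) *)
Definition homog (i : bool) (x : A0 * A1) : bool :=
  if i then x.1 == 0 else x.2 == 0.

Definition bilin_form (B : A0 * A1 -> A0 * A1 -> K) :=
  (forall x, lin_form (B x)) /\ (forall y, lin_form (fun x => B x y)).

Definition even_form (B : A0 * A1 -> A0 * A1 -> K) :=
  (forall (a : A0) (b : A1), B (a, 0) (0, b) = 0) /\
  (forall (a : A0) (b : A1), B (0, b) (a, 0) = 0).

Definition supersymmetric (B : A0 * A1 -> A0 * A1 -> K) :=
  forall (i j : bool) x y, homog i x -> homog j y ->
    B x y = (-1) ^+ (i && j) * B y x.

Definition assoc_form (B : A0 * A1 -> A0 * A1 -> K) :=
  forall x y z, B (smul x y) z = B x (smul y z).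

Definition nondegenerate (B : A0 * A1 -> A0 * A1 -> K) :=
  forall x, (forall y, B x y = 0) -> x = 0.

Definition even_symmetric_structure (B : A0 * A1 -> A0 * A1 -> K) :=
  [/\ bilin_form B, even_form B, supersymmetric B, assoc_form B
    & nondegenerate B].

(* phi : V -> V^* is a linear isomorphism onto the dual space V^* of linear
   forms; phi x is represented as the function y |-> phi x y. *)
Definition dual_iso (V : vectType K) (phi : V -> V -> K) :=
  [/\ forall x, lin_form (phi x),
      (forall (a : K) x x' y, phi (a *: x + x') y = a * phi x y + phi x' y),
      (forall x x', phi x =1 phi x' -> x = x')
    & forall f : V -> K, lin_form f -> exists x, phi x =1 f].

(* A0-bimodule maps A_i -> A_i^*, with (x.f)(y) = f(y.x), (f.x)(y) = f(x.y) *)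
Definition bimod_map0 (phi : A0 -> A0 -> K) :=
  (forall (x a y : A0), phi (m00 S x a) y = phi a (m00 S y x)) /\
  (forall (x a y : A0), phi (m00 S a x) y = phi a (m00 S x y)).

Definition bimod_map1 (phi : A1 -> A1 -> K) :=
  (forall (x : A0) (a y : A1), phi (m01 S x a) y = phi a (m10 S y x)) /\
  (forall (x : A0) (a y : A1), phi (m10 S a x) y = phi a (m01 S x y)).

End Super.

From Pilot Require Import Defs.
From HB Require Import structures.
From mathcomp Require Import all_boot all_order all_algebra.
Import GRing.Theory.
Set Implicit Arguments. Unset Strict Implicit. Unset Printing Implicit Defensive.
Local Open Scope ring_scope.

(* An even form B is the orthogonal sum of its restrictions phi0 to A0 and phi1
   to A1. Supersymmetry of B is symmetry of phi0 and antisymmetry of phi1,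
   nondegeneracy of B is injectivity (hence, in finite dimension, bijectivity)
   of x |-> phi_i x onto A_i^*, and associativity of B on homogeneous triples
   splits into the bimodule properties of phi0, phi1 and the compatibility
   phi1 (x.y) z = phi0 x (y.z). *)

Section LinearForms.
Variables (K : fieldType) (V : lmodType K) (f : V -> K).
Hypothesis f_lin : lin_form f.

Lemma lin_form0 : f 0 = 0.
Proof.
have := f_lin 1 0 0; rewrite scale1r addr0 mul1r => e.
by apply: (addrI (f 0)); rewrite addr0 -e.
Qed.

Lemma lin_formD u v : f (u + v) = f u + f v.
Proof. by have := f_lin 1 u v; rewrite scale1r mul1r. Qed.

Lemma lin_formN u : f (- u) = - f u.
Proof.
by have := f_lin (-1) u 0; rewrite !addr0 scaleN1r mulN1r lin_form0 addr0.
Qed.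

Lemma lin_formB u v : f (u - v) = f u - f v.
Proof. by rewrite lin_formD lin_formN. Qed.

End LinearForms.

Lemma bilin0l (K : fieldType) (U V W : lmodType K) (m : U -> V -> W) v :
  bilin m -> m 0 v = 0.
Proof.
case=> h _; have := h 1 0 0 v; rewrite !scale1r addr0 => e.
by apply: (addrI (m 0 v)); rewrite addr0 -e.
Qed.

Lemma bilin0r (K : fieldType) (U V W : lmodType K) (m : U -> V -> W) u :
  bilin m -> m u 0 = 0.
Proof.
case=> _ h; have := h 1 u 0 0; rewrite !scale1r addr0 => e.
by apply: (addrI (m u 0)); rewrite addr0 -e.
Qed.

Arguments bilin0l {K U V W m} v.
Arguments bilin0r {K U V W m} u.

Section DualIso.
Variables (K : fieldType) (V : vectType K) (phi : V -> V -> K).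

(* Rank-nullity applied to the linear map V -> 'Hom(V, K) induced by phi. *)
Lemma inj_dual_iso :
    (forall x, lin_form (phi x)) ->
    (forall (a : K) x x' y, phi (a *: x + x') y = a * phi x y + phi x' y) ->
    (forall x x', phi x =1 phi x' -> x = x') ->
  dual_iso phi.
Proof.
move=> phi_r phi_l phi_inj; split=> // f f_lin.
pose g (x : V) : 'Hom(V, K^o) := linfun (HB.pack (phi x : V -> K^o)
  (GRing.isLinear.Build _ _ _ _ (phi x : V -> K^o) (phi_r x))
  : {linear V -> K^o}).
have gE x y : g x y = phi x y by rewrite lfunE.
clearbody g.
have g_lin : linear g.
  by move=> a x x'; apply/lfunP => y; rewrite add_lfunE scale_lfunE !gE phi_l.
pose G : 'Hom(V, 'Hom(V, K^o)) :=
  linfun (HB.pack g (GRing.isLinear.Build _ _ _ _ g g_lin)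
  : {linear V -> 'Hom(V, K^o)}).
have GE x : G x = g x by rewrite lfunE.
have kerG : lker G == 0%VS.
  by apply/lker0P => x x'; rewrite !GE => e; apply: phi_inj => y; rewrite -!gE e.
have imG : limg G = fullv.
  apply/eqP; rewrite eqEdim subvf /= limg_dim_eq; last by rewrite capfv; apply/eqP.
  by rewrite !dimvf; change (dim V * 1 <= dim V)%N; rewrite muln1.
pose F : 'Hom(V, K^o) := linfun (HB.pack (f : V -> K^o)
  (GRing.isLinear.Build _ _ _ _ (f : V -> K^o) f_lin) : {linear V -> K^o}).
have : F \in limg G by rewrite imG memvf.
case/memv_imgP => x _ eFx; exists x => y.
by rewrite -gE -GE -eFx lfunE.
Qed.

Hypothesis phi_iso : dual_iso phi.

Lemma dual_iso0r x : phi x 0 = 0.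
Proof. by case: phi_iso => phi_r _ _ _; apply: lin_form0. Qed.

Lemma dual_iso_linl y : lin_form (phi^~ y).
Proof. by case: phi_iso => _ phi_l _ _ a u v; apply: phi_l. Qed.

Lemma dual_iso0l y : phi 0 y = 0.
Proof. exact: (@lin_form0 _ _ (phi^~ y) (dual_iso_linl y)). Qed.

Lemma dual_isoDl x x' y : phi (x + x') y = phi x y + phi x' y.
Proof. exact: (@lin_formD _ _ (phi^~ y) (dual_iso_linl y)). Qed.

Lemma dual_isoDr x y y' : phi x (y + y') = phi x y + phi x y'.
Proof. by case: phi_iso => phi_r _ _ _; apply: lin_formD. Qed.

End DualIso.

Section EvenSymmetricStructures.
Variables (K : fieldType) (A0 A1 : vectType K) (S : superMul A0 A1).

Definition sum_form (phi0 : A0 -> A0 -> K) (phi1 : A1 -> A1 -> K)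
    (x y : A0 * A1) : K :=
  phi0 x.1 y.1 + phi1 x.2 y.2.

Definition form0 (B : A0 * A1 -> A0 * A1 -> K) (x y : A0) := B (x, 0) (y, 0).
Definition form1 (B : A0 * A1 -> A0 * A1 -> K) (x y : A1) := B (0, x) (0, y).

Lemma sum_form_even_symmetric (phi0 : A0 -> A0 -> K) (phi1 : A1 -> A1 -> K) :
    dual_iso phi0 -> dual_iso phi1 -> bimod_map0 S phi0 -> bimod_map1 S phi1 ->
    (forall x y : A0, phi0 x y = phi0 y x) ->
    (forall x y : A1, phi1 x y = - phi1 y x) ->
    (forall (x : A0) (y z : A1), phi1 (m01 S x y) z = phi0 x (m11 S y z)) ->
  even_symmetric_structure S (sum_form phi0 phi1).
Proof.
move=> iso0 iso1 [bm0l bm0r] [bm1l bm1r] sym0 sym1 compat.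
have [phi0_r phi0_l inj0 _] := iso0; have [phi1_r phi1_l inj1 _] := iso1.
rewrite /sum_form; split.
- split=> [x a u v | y a u v] /=.
    by rewrite (phi0_r x.1) (phi1_r x.2) mulrDr addrACA.
  by rewrite phi0_l phi1_l mulrDr addrACA.
- by split=> a b /=; rewrite dual_iso0r // dual_iso0l // addr0.
- by move=> [] [] x y /=; rewrite /homog => /eqP-> /eqP->;
    rewrite ?dual_iso0r // ?dual_iso0l // ?add0r ?addr0 ?mul1r ?mulN1r.
- move=> x y z /=; rewrite !dual_isoDl // !dual_isoDr //.
  rewrite (bm0r y.1 x.1) compat bm1r [phi0 (m11 _ _ _) _]sym0 -compat bm1l.
  by rewrite [phi0 x.1 _ + _]addrC addrACA [RHS]addrACA addrC
    [phi1 _ _ + phi0 _ _]addrC.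
- move=> [x1 x2] Bx0; congr pair.
    apply: inj0 => w; rewrite dual_iso0l //.
    by have := Bx0 (w, 0); rewrite /= dual_iso0r // addr0.
  apply: inj1 => w; rewrite dual_iso0l //.
  by have := Bx0 (0, w); rewrite /= dual_iso0r // add0r.
Qed.

Variable B : A0 * A1 -> A0 * A1 -> K.
Hypotheses (B_bilin : bilin_form B) (B_even : even_form B)
  (B_nondeg : Defs.nondegenerate B).

Lemma bilin_formBl u v y : B (u - v) y = B u y - B v y.
Proof. by case: B_bilin => _ Bl; exact: (@lin_formB _ _ (B^~ y) (Bl y)). Qed.

Lemma bilin_form_splitr x y : B x y = B x (y.1, 0) + B x (0, y.2).
Proof.
case: B_bilin => Br _; rewrite -lin_formD //.
by case: y => y1 y2; congr B; congr pair; rewrite /= ?addr0 ?add0r.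
Qed.

Lemma form0_dual_iso : dual_iso (form0 B).
Proof.
have [Br Bl] := B_bilin.
have pairE a (u v : A0) : ((a *: u + v, 0) : A0 * A1) = a *: (u, 0) + (v, 0).
  by apply/eqP; rewrite xpair_eqE /= scaler0 addr0 !eqxx.
apply: inj_dual_iso => [x a u v | a x x' y | x x' e]; rewrite /form0 ?pairE.
- exact: Br.
- exact: Bl.
have xx'0 : ((x, 0) - (x', 0) : A0 * A1) = 0.
  apply: B_nondeg => y; rewrite bilin_form_splitr !bilin_formBl.
  have := e y.1; rewrite /form0 => ->.
  by case: B_even => ev _; rewrite !ev !subrr addr0.
by apply/eqP; rewrite -subr_eq0; have /= -> := congr1 fst xx'0.
Qed.

Lemma form1_dual_iso : dual_iso (form1 B).
Proof.
have [Br Bl] := B_bilin.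
have pairE a (u v : A1) : ((0, a *: u + v) : A0 * A1) = a *: (0, u) + (0, v).
  by apply/eqP; rewrite xpair_eqE /= scaler0 addr0 !eqxx.
apply: inj_dual_iso => [x a u v | a x x' y | x x' e]; rewrite /form1 ?pairE.
- exact: Br.
- exact: Bl.
have xx'0 : ((0, x) - (0, x') : A0 * A1) = 0.
  apply: B_nondeg => y; rewrite bilin_form_splitr !bilin_formBl.
  have := e y.2; rewrite /form1 => ->.
  by case: B_even => _ ev; rewrite !ev !subrr addr0.
by apply/eqP; rewrite -subr_eq0; have /= -> := congr1 snd xx'0.
Qed.

Hypotheses (hS : assoc_superalgebra S) (B_super : supersymmetric B)
  (B_assoc : assoc_form S B).

Lemma smul00 (x a : A0) : smul S (x, 0) (a, 0) = (m00 S x a, 0).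
Proof.
case: hS => _ h01 h10 h11 _.
by rewrite /smul /= (bilin0l _ h11) (bilin0r _ h01) (bilin0l _ h10) !addr0.
Qed.

Lemma smul01 (x : A0) (a : A1) : smul S (x, 0) (0, a) = (0, m01 S x a).
Proof.
case: hS => h00 _ h10 h11 _.
by rewrite /smul /= (bilin0r _ h00) (bilin0l _ h11) (bilin0l _ h10) !addr0.
Qed.

Lemma smul10 (a : A1) (x : A0) : smul S (0, a) (x, 0) = (0, m10 S a x).
Proof.
case: hS => h00 h01 _ h11 _.
by rewrite /smul /= (bilin0l _ h00) (bilin0r _ h11) (bilin0l _ h01) !add0r.
Qed.

Lemma smul11 (x a : A1) : smul S (0, x) (0, a) = (m11 S x a, 0).
Proof.
case: hS => h00 h01 h10 _ _.
by rewrite /smul /= (bilin0l _ h00) (bilin0l _ h01) (bilin0r _ h10) !add0r.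
Qed.

Lemma form0_sym x y : form0 B x y = form0 B y x.
Proof. by rewrite /form0 (@B_super false false) ?mul1r //=. Qed.

Lemma form1_antisym x y : form1 B x y = - form1 B y x.
Proof. by rewrite /form1 (@B_super true true) ?mulN1r //=. Qed.

Lemma form_compat (x : A0) (y z : A1) :
  form1 B (m01 S x y) z = form0 B x (m11 S y z).
Proof. by rewrite /form0 /form1 -smul01 B_assoc smul11. Qed.

Lemma form0_bimod : bimod_map0 S (form0 B).
Proof.
split=> x a y; last by rewrite /form0 -smul00 B_assoc smul00.
by rewrite form0_sym /form0 -smul00 -B_assoc smul00 -/(form0 B _ _) form0_sym.
Qed.

Lemma form1_bimod : bimod_map1 S (form1 B).
Proof.
split=> x a y; last by rewrite /form1 -smul10 B_assoc smul01.
rewrite /form1 -smul01 B_assoc smul11 -/(form0 B _ _) form0_sym.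
by rewrite /form0 -smul11 B_assoc smul10.
Qed.

End EvenSymmetricStructures.

Theorem mainTheorem1 (K : closedFieldType) (hK : [pchar K] =i pred0)
    (A0 A1 : vectType K) (S : superMul A0 A1) (hS : assoc_superalgebra S) :
  (exists B : A0 * A1 -> A0 * A1 -> K, even_symmetric_structure S B) <->
  (exists (phi0 : A0 -> A0 -> K) (phi1 : A1 -> A1 -> K),
     [/\ dual_iso phi0, dual_iso phi1, bimod_map0 S phi0 & bimod_map1 S phi1] /\
     [/\ (forall x y : A0, phi0 x y = phi0 y x),
         (forall x y : A1, phi1 x y = - phi1 y x)
       & forall (x : A0) (y z : A1), phi1 (m01 S x y) z = phi0 x (m11 S y z)]).
Proof.
split=> [[B [B_bilin B_even B_super B_assoc B_nondeg]] | ].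
  exists (form0 B), (form1 B); split.
    split; [exact: form0_dual_iso | exact: form1_dual_iso
           | exact: form0_bimod | exact: form1_bimod].
  split; [exact: form0_sym | exact: form1_antisym | exact: form_compat].
case=> phi0 [phi1 [[iso0 iso1 bm0 bm1] [sym0 sym1 compat]]].
by exists (sum_form phi0 phi1); apply: sum_form_even_symmetric.
Qed.
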